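(* Let $X$ be a proper metric space, $W\subset X$ a closed subset, $g:W\to\mathbb R$ a function, and $f_n:X\to\mathbb R_+$ ($n=1,2,\dots$) coarsely proper functions with $f_n|_W\ge g$ for all $n$. Then there exist bounded subsets $A_n\subset X$ and a coarsely proper function $f:X\to\mathbb R_+$ such that $f|_W\ge g$, and for every $n$: $f(x)\le n$ for $x\in A_n$ and $f(x)\le f_n(x)$ for $x\in X\setminus A_n$.
   Context: $\mathbb R_+=[0,\infty)$. A function is coarsely proper if preimages of bounded sets are bounded (functions need not be continuous). *)

From mathcomp Require Import all_boot all_order all_algebra.
From mathcomp Require Import boolp classical_sets reals.
From Stdlib Require List.
Set Implicit Arguments. Unset Strict Implicit. Unset Printing Implicit Defensive.
Import Order.TTheory GRing.Theory Num.Theory.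
Local Open Scope ring_scope.
Local Open Scope classical_set_scope.

Definition is_metric (R : realType) (X : Type) (d : X -> X -> R) : Prop :=
  (forall x y, 0 <= d x y) /\
  (forall x y, d x y = 0 <-> x = y) /\
  (forall x y, d x y = d y x) /\
  (forall x y z, d x z <= d x y + d y z).

Definition mopen (R : realType) (X : Type) (d : X -> X -> R) (U : set X) : Prop :=
  forall x, U x -> exists2 e : R, 0 < e & forall y, d x y < e -> U y.

Definition mclosed (R : realType) (X : Type) (d : X -> X -> R) (W : set X) : Prop :=
  mopen d (~` W).

Definition mbounded (R : realType) (X : Type) (d : X -> X -> R) (A : set X) : Prop :=
  exists r : R, forall x y, A x -> A y -> d x y <= r.

Definition mcompact (R : realType) (X : Type) (d : X -> X -> R) (K : set X) : Prop :=
  forall (I : Type) (U : I -> set X), (forall i, mopen d (U i)) ->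
    (forall x, K x -> exists i, U i x) ->
    exists s : list I, forall x, K x -> exists i, List.In i s /\ U i x.

Definition proper_metric (R : realType) (X : Type) (d : X -> X -> R) : Prop :=
  is_metric d /\ forall K, mclosed d K -> mbounded d K -> mcompact d K.

Definition rbounded (R : realType) (B : set R) : Prop :=
  exists M : R, forall t, B t -> `|t| <= M.

Definition coarsely_proper (R : realType) (X : Type) (d : X -> X -> R) (f : X -> R) : Prop :=
  forall B : set R, rbounded B -> mbounded d (f @^-1` B).

From mathcomp Require Import all_boot all_order all_algebra.
From mathcomp Require Import boolp classical_sets reals.
From mathcomp Require Import lra.

Set Implicit Arguments.
Unset Strict Implicit.
Unset Printing Implicit Defensive.
Import Order.TTheory GRing.Theory Num.Theory.
Local Open Scope ring_scope.
Local Open Scope classical_set_scope.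

(* The lower envelope f x := inf_n max(n, f_n x) works.  It is below f_n
   off the bounded set A_n := [f <= n], and [f x <= r] forces f_n x < r + 1
   for some n < r + 1, so bounded values of f are attained in finitely many
   bounded sublevel sets of the f_n. *)

Section BoundedSets.
Variables (R : realType) (X : Type) (d : X -> X -> R).
Hypothesis d_metric : is_metric d.

Lemma mbounded_sub (A B : set X) : A `<=` B -> mbounded d B -> mbounded d A.
Proof. by move=> AB [r Hr]; exists r => x y /AB Ax /AB Ay; exact: Hr. Qed.

Lemma mbounded_setU (A B : set X) :
  mbounded d A -> mbounded d B -> mbounded d (A `|` B).
Proof.
have [d0 [_ [dsym dtri]]] := d_metric.
have [[a Aa]|/nonemptyPn-> _] := pselect (A !=set0); last by rewrite set0U.
have [[b Bb]|/nonemptyPn-> ?] := pselect (B !=set0); last by rewrite setU0.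
move=> [rA HA] [rB HB].
have rA0 : 0 <= rA by apply: le_trans (d0 a a) (HA _ _ Aa Aa).
have rB0 : 0 <= rB by apply: le_trans (d0 b b) (HB _ _ Bb Bb).
have dab := d0 a b.
exists (rA + rB + d a b) => x y [Ax|Bx] [Ay|By].
- by have := HA _ _ Ax Ay; lra.
- by have := HA _ _ Ax Aa; have := HB _ _ Bb By; have := dtri x a y;
    have := dtri a b y; lra.
- by have := HB _ _ Bx Bb; have := HA _ _ Aa Ay; have := dtri x b y;
    have := dtri b a y; have := dsym a b; lra.
- by have := HB _ _ Bx By; lra.
Qed.

Lemma mbounded_bigcup_nat (S : nat -> set X) (N : nat) :
  (forall n, (0 < n <= N)%N -> mbounded d (S n)) ->
  mbounded d (\bigcup_(n in [set n | (0 < n <= N)%N]) S n).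
Proof.
elim: N => [_|N IH HS].
  by exists 0 => x y [n /= /andP[+ +]]; rewrite leqn0 => /lt0n_neq0 /negP.
apply: (@mbounded_sub _
  ((\bigcup_(n in [set n | (0 < n <= N)%N]) S n) `|` S N.+1)).
  move=> x [n /= /andP[n0]]; rewrite leq_eqVlt => /orP[/eqP->|]; first by right.
  by rewrite ltnS => nN Sx; left; exists n => //=; rewrite n0.
apply: mbounded_setU; last by apply: HS; rewrite /= leqnn.
by apply: IH => n /andP[n0 nN]; apply: HS; rewrite n0 leqW.
Qed.

Lemma coarsely_proper_sublevel (h : X -> R) (r : R) :
  (forall x, 0 <= h x) -> coarsely_proper d h -> mbounded d [set x | h x <= r].
Proof.
move=> h0 hcp; apply: (@mbounded_sub _ (h @^-1` [set t | `|t| <= r])).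
  by move=> x /= hx; rewrite ger0_norm.
by apply: hcp; exists r.
Qed.

End BoundedSets.

Section Envelope.
Variables (R : realType) (X : Type) (fs : nat -> X -> R).
Hypothesis fs_ge0 : forall n, (0 < n)%N -> forall x, 0 <= fs n x.

Definition envelope_values (x : X) : set R :=
  [set Num.max n%:R (fs n x) | n in [set n : nat | (0 < n)%N]].

Definition envelope (x : X) : R := inf (envelope_values x).

Lemma envelope_values_nonempty x : envelope_values x !=set0.
Proof. by exists (Num.max 1%:R (fs 1 x)); exists 1%N. Qed.

Lemma envelope_values_lbound x : lbound (envelope_values x) 0.
Proof. by move=> _ [n n0 <-]; rewrite le_max fs_ge0 ?orbT. Qed.

Lemma envelope_values_has_lbound x : has_lbound (envelope_values x).
Proof. by exists 0; exact: envelope_values_lbound. Qed.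

Lemma envelope_ge0 x : 0 <= envelope x.
Proof.
by apply: lb_le_inf; [exact: envelope_values_nonempty|exact: envelope_values_lbound].
Qed.

Lemma envelope_le x n : (0 < n)%N -> envelope x <= Num.max n%:R (fs n x).
Proof. by move=> n0; apply: ge_inf (envelope_values_has_lbound x) _ _; exists n. Qed.

Lemma envelope_ge x (c : R) :
  (forall n, (0 < n)%N -> c <= fs n x) -> c <= envelope x.
Proof.
move=> cfs; apply: lb_le_inf; first exact: envelope_values_nonempty.
move=> _ [n n0 <-].
by rewrite le_max cfs ?orbT.
Qed.

Lemma envelope_le_fs x n :
  (0 < n)%N -> n%:R < envelope x -> envelope x <= fs n x.
Proof.
move=> n0 nf; have := envelope_le x n0; rewrite le_max => /orP[] // nle.
by have := lt_le_trans nf nle; rewrite ltxx.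
Qed.

Lemma envelope_witness x :
  exists2 n, (0 < n)%N & Num.max n%:R (fs n x) < envelope x + 1.
Proof.
have [_ [n n0 <-] en] := inf_adherent (ltr01 : (0 : R) < 1)
  (conj (envelope_values_nonempty x) (envelope_values_has_lbound x)).
by exists n.
Qed.

Lemma envelope_coarsely_proper (d : X -> X -> R) :
  is_metric d -> (forall n, (0 < n)%N -> coarsely_proper d (fs n)) ->
  coarsely_proper d envelope.
Proof.
move=> dm fscp B [M HM].
pose r := `|M| + 1; pose N := Num.bound r.
have rN : r < N%:R by apply: archi_boundP; rewrite addr_ge0.
apply: (@mbounded_sub _ _ d _
  (\bigcup_(n in [set n | (0 < n <= N)%N]) [set x | fs n x <= r])); last first.
  apply: mbounded_bigcup_nat => // n /andP[n0 _].
  by apply: coarsely_proper_sublevel; [exact: fs_ge0 | exact: fscp].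
move=> x /= /HM fxM; have [n n0] := envelope_witness x.
have fx_le : envelope x + 1 <= r.
  by rewrite /r lerD2r (le_trans (ler_norm _) (le_trans fxM (ler_norm _))).
move=> /lt_le_trans /(_ fx_le); rewrite gt_max => /andP[nr fsr].
exists n; last exact: ltW.
by rewrite /= n0 -(ler_nat R) ltW // (lt_trans nr rN).
Qed.

End Envelope.

Theorem proposition7p5 (R : realType) (X : Type) (d : X -> X -> R)
  (W : set X) (g : X -> R) (fs : nat -> X -> R) :
  proper_metric d ->
  mclosed d W ->
  (forall n, (0 < n)%N -> forall x, 0 <= fs n x) ->
  (forall n, (0 < n)%N -> coarsely_proper d (fs n)) ->
  (forall n, (0 < n)%N -> forall x, W x -> g x <= fs n x) ->
  exists (A : nat -> set X) (f : X -> R),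
    (forall x, 0 <= f x) /\
    coarsely_proper d f /\
    (forall x, W x -> g x <= f x) /\
    (forall n, (0 < n)%N ->
       mbounded d (A n) /\
       (forall x, A n x -> f x <= n%:R) /\
       (forall x, ~ A n x -> f x <= fs n x)).
Proof.
move=> [dm _] _ fs0 fscp gfs.
have f0 := envelope_ge0 fs0.
have fcp := envelope_coarsely_proper fs0 dm fscp.
exists (fun n => [set x | envelope fs x <= n%:R]), (envelope fs).
do 3 (split => //); first by move=> x Wx; apply: envelope_ge => // n n0; exact: gfs.
move=> n n0; split; first exact: coarsely_proper_sublevel.
split=> // x /negP; rewrite -ltNge; exact: envelope_le_fs.
Qed.
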